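(* Let $k$ be a positive integer. If $T$ is a semi-complete digraph with $n$ vertices that admits an ordering of cost at most $k$, then the number of $(4k)^{2/3}$-cuts of $T$ is at most $$A\cdot\exp\Bigl(2C\,(4k)^{1/3}\sqrt{1+\ln\bigl(2(4k)^{2/3}\bigr)}\Bigr)\cdot(n+1),$$ where $C=\pi\sqrt{2/3}$ and $A$ is a constant such that $p(m)\le\frac{A}{m+1}\exp(C\sqrt{m})$ for all integers $m\ge0$.
   Context: A simple digraph (no loops, no multiple arcs) $T$ is semi-complete if for every pair of distinct vertices $v,w$ at least one of $(v,w),(w,v)$ is an arc. The cost of an ordering $(v_1,\dots,v_n)$ of $V(T)$ is $\sum_{(v_i,v_j)\in E(T),\,i>j}(i-j)$. For real $d\ge 0$, a $d$-cut of a digraph $T$ is an ordered partition $(X,Y)$ of $V(T)$ (either part may be empty) such that there are at most $d$ arcs $(u,v)\in E(T)$ with $u\in Y$ and $v\in X$. $p(m)$ denotes the number of partitions of the integer $m$; such $A$ exists by the Hardy–Ramanujan estimate. *)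

From Stdlib Require Import Reals.
From mathcomp Require Import all_boot fingroup perm.
Set Implicit Arguments. Unset Strict Implicit. Unset Printing Implicit Defensive.

(* A digraph on vertex set 'I_n is given by its arc relation T : rel 'I_n
   ((u,v) is an arc iff T u v). Multiple arcs are excluded by construction. *)

Definition loopless (n : nat) (T : rel 'I_n) : Prop := forall v, ~~ T v v.

Definition semi_complete (n : nat) (T : rel 'I_n) : Prop :=
  forall v w : 'I_n, v != w -> T v w || T w v.

(* An ordering (v_1,...,v_n) is a bijection s : positions -> vertices,
   v_{i+1} = s i.  Cost = sum over arcs (v_i,v_j) with i > j of (i - j). *)
Definition cost (n : nat) (T : rel 'I_n) (s : {perm 'I_n}) : nat :=
  \sum_(i < n) \sum_(j < n | (j < i) && T (s i) (s j)) (i - j).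

Definition back_arcs (n : nat) (T : rel 'I_n) (X : {set 'I_n}) : nat :=
  #|[set uv : 'I_n * 'I_n | [&& uv.1 \notin X, uv.2 \in X & T uv.1 uv.2]]|.

Definition is_dcut (n : nat) (T : rel 'I_n) (d : R) (X : {set 'I_n}) : Prop :=
  Rle (INR (back_arcs T X)) d.

(* number of d-cuts: ordered partitions (X,Y) are determined by X *)
Definition num_dcuts (n : nat) (T : rel 'I_n) (d : R) : nat :=
  #|[set X : {set 'I_n} | if Rle_dec (INR (back_arcs T X)) d then true else false]|.

(* p(m): number of partitions of m, counted via multiplicity vectors:
   c i = number of parts equal to i+1, with sum (i+1) * c i = m.
   (each c i <= m, so 'I_(m.+1) loses nothing) *)
Definition npartitions (m : nat) : nat :=
  #|[set c : {ffun 'I_m -> 'I_m.+1} | \sum_(i < m) i.+1 * c i == m]|.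

Local Open Scope R_scope.
Definition Cconst : R := PI * sqrt (2 / 3).

Definition cut_bound (A : R) (k n : nat) : R :=
  A * exp (2 * Cconst * Rpower (4 * INR k) (1 / 3)
            * sqrt (1 + ln (2 * Rpower (4 * INR k) (2 / 3))))
     * INR (n + 1).

Definition dthr (k : nat) : R := Rpower (4 * INR k) (2 / 3).

Definition HR_constant (A : R) : Prop :=
  forall m : nat, INR (npartitions m) <= A / INR (m + 1) * exp (Cconst * sqrt (INR m)).

From Stdlib Require Import Reals Lra Psatz ZArith.
From mathcomp Require Import all_boot fingroup perm.
Set Implicit Arguments. Unset Strict Implicit. Unset Printing Implicit Defensive.

(* Fix such an ordering s and put t = (4k)^(1/3), so the threshold is t^2.
   An inversion of a vertex set X is a pair of positions q < p with s q
   outside X and s p inside X.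
   1. Encoding.  For each inside position p count the outside positions
      before p.  The multiplicities of the positive counts form a partition of
      the number of inversions of X, and together with the number of zero
      counts they determine X.  So the sets with at most M inversions number
      at most (n+1) * sum_(m <= M) p(m).
   2. Few inversions.  An inversion is a back arc (at most t^2 of them for a
      cut), or its vertices are joined by an arc pointing backwards in the
      ordering, so its gap is paid for in the cost.  Inversions with gap <= h
      number at most h*r, where r^2 <= 2 * #inversions bounds each class of
      equal gap; with h = floor(t/2) every cut has at most 3 t^2 inversions.
   3. Analysis.  The Hardy-Ramanujan hypothesis on p(m) and the inequality
      (x+1) exp(C sqrt x) <= exp(2 C t sqrt(1 + ln(2 t^2))) for x <= 3 t^2
      turn the count of step 1 into the claimed bound. *)

Lemma card_filter_sum (U : finType) (P Q : pred U) :
  #|[set x | P x && Q x]| = \sum_(x | P x) (Q x : nat).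
Proof.
rewrite -sum1_card big_mkcond [RHS]big_mkcond; apply: eq_bigr => x _.
by rewrite inE; case: (P x); case: (Q x).
Qed.

Lemma sum_weighted_indicator (N x : nat) : x < N -> \sum_(v < N) v * (x == v) = x.
Proof.
move=> hx; rewrite (bigD1 (Ordinal hx)) //= eqxx muln1 big1 ?addn0 // => v hv.
suff -> : (x == v) = false by rewrite muln0.
by apply: contraNF hv => /eqP e; apply/eqP/val_inj.
Qed.

Lemma sum_over_pairs (U : finType) (F : U * U -> nat) :
  \sum_(x : U * U) F x = \sum_(i : U) \sum_(j : U) F (i, j).
Proof. by rewrite pair_bigA; apply: eq_bigr => -[]. Qed.

Section Encoding.
Variables (n : nat) (s : {perm 'I_n}).

Definition outside_before (X : {set 'I_n}) (p : 'I_n) : nat :=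
  #|[set q : 'I_n | (q < p) && (s q \notin X)]|.

Definition inversions (X : {set 'I_n}) : nat :=
  \sum_(p | s p \in X) outside_before X p.

Definition level (X : {set 'I_n}) (v : nat) : nat :=
  #|[set p : 'I_n | (s p \in X) && (outside_before X p == v)]|.

Lemma outside_before_prefix (X X' : {set 'I_n}) (p : 'I_n) :
  (forall q : 'I_n, q < p -> (s q \in X) = (s q \in X')) ->
  outside_before X p = outside_before X' p.
Proof.
move=> H; apply: eq_card => q; rewrite !inE.
by case hq: (q < p) => //=; rewrite H.
Qed.

Lemma outside_before_lt (X : {set 'I_n}) (p q : 'I_n) :
  p < q -> s p \notin X -> outside_before X p < outside_before X q.
Proof.
move=> hpq hp; apply: proper_card; apply/properP; split.
  apply/subsetP => r; rewrite !inE => /andP[hr ->]; by rewrite (ltn_trans hr hpq).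
by exists p; rewrite !inE ?hpq ?hp // ltnn.
Qed.

Lemma level_first_difference (X X' : {set 'I_n}) (p : 'I_n) :
  (forall q : 'I_n, q < p -> (s q \in X) = (s q \in X')) ->
  s p \in X -> s p \notin X' ->
  level X' (outside_before X p) < level X (outside_before X p).
Proof.
move=> H hX hX'; apply: proper_card; apply/properP; split.
  apply/subsetP => q; rewrite !inE => /andP[hq /eqP hv].
  case: (ltngtP q p) => hqp.
  - rewrite H // hq /= (@outside_before_prefix X X' q) ?hv //.
    by move=> r hr; apply: H; apply: ltn_trans hr hqp.
  - have := outside_before_lt hqp hX'.
    by rewrite hv (outside_before_prefix H) ltnn.
  - by move: hq; rewrite (val_inj hqp) (negbTE hX').
exists p; first by rewrite inE hX eqxx.
by rewrite inE (negbTE hX').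
Qed.

(* A set is determined by its levels: compare them at the first position
   where two sets differ. *)
Lemma level_inj (X X' : {set 'I_n}) : (forall v, level X v = level X' v) -> X = X'.
Proof.
move=> Hl.
case: (pickP [pred p | (s p \in X) != (s p \in X')]) => [p0 hp0|hnone]; last first.
  apply/setP => x; have := hnone (s^-1 x)%g; rewrite /= permKV.
  by move/negbT; rewrite negbK => /eqP.
case: (arg_minnP (fun p : 'I_n => (p : nat)) hp0) => p hp hmin.
have Hq : forall q : 'I_n, q < p -> (s q \in X) = (s q \in X').
  move=> q hq; apply/eqP; apply: contraTT hq => hq; rewrite -leqNgt; exact: hmin.
move: hp; rewrite /=; case hpX: (s p \in X); case hpX': (s p \in X') => //= _.
- by have := level_first_difference Hq hpX (negbT hpX'); rewrite Hl ltnn.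
- have Hq' : forall q : 'I_n, q < p -> (s q \in X') = (s q \in X).
    by move=> q hq; rewrite Hq.
  by have := level_first_difference Hq' hpX' (negbT hpX); rewrite Hl ltnn.
Qed.

Lemma outside_before_le_inversions (X : {set 'I_n}) (p : 'I_n) :
  s p \in X -> outside_before X p <= inversions X.
Proof. by move=> h; rewrite /inversions (bigD1 p) //= leq_addr. Qed.

Lemma level_le_inversions (X : {set 'I_n}) (v : nat) : 0 < v -> level X v <= inversions X.
Proof.
move=> hv; rewrite /level (card_filter_sum (fun p => s p \in X)) /inversions.
by apply: leq_sum => p _; case: eqP => [->|]; rewrite ?leq0n.
Qed.

Lemma level_gt_inversions (X : {set 'I_n}) (v : nat) : inversions X < v -> level X v = 0.
Proof.
move=> hv; apply/eqP; rewrite cards_eq0; apply/eqP/setP => p; rewrite !inE.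
case hp: (s p \in X) => //=; apply/negbTE; rewrite neq_ltn.
by rewrite (leq_ltn_trans (outside_before_le_inversions hp) hv).
Qed.

Lemma sum_levels (X : {set 'I_n}) (N : nat) :
  (forall p, s p \in X -> outside_before X p < N) ->
  \sum_(v < N) v * level X v = inversions X.
Proof.
move=> H.
under eq_bigr => v _ do
  rewrite /level (card_filter_sum (fun p => s p \in X)) big_distrr.
rewrite exchange_big /inversions; apply: eq_bigr => p hp.
exact: sum_weighted_indicator (H p hp).
Qed.

Definition partition_code (m : nat) (X : {set 'I_n}) : {ffun 'I_m -> 'I_m.+1} :=
  [ffun i : 'I_m => inord (level X i.+1)].

(* The code stores the positive levels exactly, as they never exceed m. *)
Lemma partition_codeK (m : nat) (X : {set 'I_n}) (i : 'I_m) :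
  inversions X = m -> partition_code m X i = level X i.+1 :> nat.
Proof.
move=> hm; rewrite ffunE inordK // ltnS.
by apply: leq_trans (level_le_inversions X (ltn0Sn i)) _; rewrite hm.
Qed.

Lemma partition_code_mem (m : nat) (X : {set 'I_n}) : inversions X = m ->
  partition_code m X \in
    [set c : {ffun 'I_m -> 'I_m.+1} | \sum_(i < m) i.+1 * c i == m].
Proof.
move=> hm; rewrite inE.
under eq_bigr => i _ do rewrite partition_codeK //.
have := @sum_levels X m.+1; rewrite big_ord_recl mul0n add0n => -> //.
  by rewrite hm.
by move=> p hp; rewrite ltnS -hm; exact: outside_before_le_inversions.
Qed.

Lemma partition_code_inj (m : nat) (X X' : {set 'I_n}) :
  inversions X = m -> inversions X' = m -> level X 0 = level X' 0 ->
  partition_code m X = partition_code m X' -> X = X'.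
Proof.
move=> hX hX' h0 he; apply: level_inj => -[//|v].
case: (ltnP v m) => hv; last by rewrite !level_gt_inversions // ?hX ?hX' ltnS.
have := congr1 (fun f : {ffun 'I_m -> 'I_m.+1} => (f (Ordinal hv) : nat)) he.
by rewrite !partition_codeK.
Qed.

Lemma card_fiber_le_partitions (S : {set {set 'I_n}}) (a m : nat) :
  #|[set X in S | (level X 0 == a) && (inversions X == m)]| <= npartitions m.
Proof.
rewrite /npartitions -(card_in_imset (f := partition_code m)).
  apply: subset_leq_card; apply/subsetP => c /imsetP[X hX ->].
  by move: hX; rewrite !inE => /and3P[_ _ /eqP /partition_code_mem]; rewrite inE.
move=> X X'; rewrite !inE => /and3P[_ /eqP ha /eqP hm] /and3P[_ /eqP ha' /eqP hm'].
by apply: partition_code_inj; rewrite ?hm ?hm' ?ha ?ha'.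
Qed.

Lemma card_le_partition_sums (S : {set {set 'I_n}}) (M : nat) :
  (forall X, X \in S -> inversions X <= M) ->
  #|S| <= n.+1 * \sum_(m < M.+1) npartitions m.
Proof.
move=> HM.
apply: (@leq_trans (\sum_(X in S) \sum_(a < n.+1) \sum_(m < M.+1)
          ((level X 0 == a) && (inversions X == m) : nat))).
  rewrite -sum1_card; apply: leq_sum => X hX.
  have ha : level X 0 < n.+1
    by rewrite ltnS -[X in _ <= X](card_ord n) max_card.
  have hm : inversions X < M.+1 by rewrite ltnS HM.
  rewrite (bigD1 (Ordinal ha)) //= (bigD1 (Ordinal hm)) //= !eqxx /=.
  by rewrite -addnA leq_addr.
rewrite exchange_big -[n.+1 in X in _ <= X]card_ord -sum_nat_const.
apply: leq_sum => a _; rewrite exchange_big /=; apply: leq_sum => m _.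
rewrite -card_filter_sum; exact: card_fiber_le_partitions.
Qed.

End Encoding.

Section InversionPairs.
Variables (n : nat) (s : {perm 'I_n}) (T : rel 'I_n) (X : {set 'I_n}).

Definition inversion_pairs : {set 'I_n * 'I_n} :=
  [set qp : 'I_n * 'I_n | [&& qp.1 < qp.2, s qp.1 \notin X & s qp.2 \in X]].

Definition gap (qp : 'I_n * 'I_n) : nat := qp.2 - qp.1.

Definition back_pairs : {set 'I_n * 'I_n} :=
  [set qp in inversion_pairs | T (s qp.1) (s qp.2)].

Definition backward_pairs : {set 'I_n * 'I_n} :=
  [set qp in inversion_pairs | ~~ T (s qp.1) (s qp.2)].

Definition far_backward_pairs (h : nat) : {set 'I_n * 'I_n} :=
  [set qp in inversion_pairs | ~~ T (s qp.1) (s qp.2) && (h < gap qp)].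

Definition gap_class (l : nat) : {set 'I_n * 'I_n} :=
  [set qp in inversion_pairs | gap qp == l].

Lemma card_inversion_pairs : #|inversion_pairs| = inversions s X.
Proof.
rewrite -sum1_card big_mkcond /= sum_over_pairs.
rewrite exchange_big /inversions [RHS]big_mkcond; apply: eq_bigr => p _.
rewrite /outside_before -sum1_card.
case hp: (s p \in X); last by rewrite big1 // => q _; rewrite !inE /= hp !andbF.
by rewrite [RHS]big_mkcond; apply: eq_bigr => q _; rewrite !inE /= hp andbT.
Qed.

Lemma card_back_pairs : #|back_pairs| <= back_arcs T X.
Proof.
rewrite /back_arcs -[#|back_pairs|](card_in_imset (f := fun qp : 'I_n * 'I_n => (s qp.1, s qp.2))).
  apply: subset_leq_card; apply/subsetP => uv /imsetP[qp hqp ->].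
  by move: hqp; rewrite !inE /= => /andP[/and3P[_ -> ->] ->].
by move=> [a b] [c d] _ _ /= [] /perm_inj -> /perm_inj ->.
Qed.

(* In a semi-complete digraph each backward pair (q, p) carries the arc
   (s p, s q), which contributes its gap p - q to the cost of s. *)
Lemma backward_gaps_le_cost : semi_complete T ->
  \sum_(qp in backward_pairs) gap qp <= cost T s.
Proof.
move=> hsc; rewrite big_mkcond /= sum_over_pairs.
rewrite exchange_big /cost; apply: leq_sum => p _.
rewrite [X in _ <= X]big_mkcond; apply: leq_sum => q _; rewrite !inE /=.
case hqp: (q < p) => //=; case: (s q \in X) => //=; case: (s p \in X) => //=.
case hT: (T (s q) (s p)) => //=.
have hne : s q != s p by apply: contraTneq hqp => /perm_inj ->; rewrite ltnn.
by have := hsc _ _ hne; rewrite hT /= => ->.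
Qed.

(* Markov's inequality: far backward pairs each contribute more than h. *)
Lemma card_far_backward_pairs (h : nat) :
  #|far_backward_pairs h| * h.+1 <= \sum_(qp in backward_pairs) gap qp.
Proof.
rewrite -sum_nat_const big_mkcond [X in _ <= X]big_mkcond /=.
apply: leq_sum => qp _; rewrite !inE.
by case: ifP => // /and3P[-> -> hd].
Qed.

Lemma gap_classP (l : nat) (qp : 'I_n * 'I_n) :
  qp \in gap_class l -> qp.2 = qp.1 + l :> nat.
Proof.
by rewrite !inE /gap => /andP[/and3P[h _ _] /eqP <-]; rewrite subnKC // ltnW.
Qed.

Lemma gap_class0 : gap_class 0 = set0.
Proof.
apply/setP => qp; rewrite !inE /gap.
by apply/negP => /andP[/and3P[h _ _]]; rewrite subn_eq0 leqNgt h.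
Qed.

(* Two pairs (q, q + l) and (q', q' + l) of gap l yield the inversion
   (q, q' + l) if q <= q' and (q', q + l) otherwise; together with a bit
   recording the case this is injective, so |class|^2 <= 2 * #inversions. *)
Lemma gap_class_sq (l : nat) : #|gap_class l| * #|gap_class l| <= 2 * #|inversion_pairs|.
Proof.
pose g (pp : ('I_n * 'I_n) * ('I_n * 'I_n)) :=
  if pp.1.1 <= pp.2.1 then ((pp.1.1, pp.2.2), true) else ((pp.2.1, pp.1.2), false).
rewrite -cardsX mulnC -[2]card_bool -cardsT -cardsX -(card_in_imset (f := g)).
  apply: subset_leq_card; apply/subsetP => z /imsetP[[p q] hpq ->].
  move: hpq; rewrite !inE /= => /andP[/andP[/and3P[h1 h2 h3] _] /andP[/and3P[h4 h5 h6] _]].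
  rewrite /g /=; case: (leqP p.1 q.1) => hle /=; rewrite ?andbT.
    by rewrite h2 h6 (leq_ltn_trans hle h4).
  by rewrite h5 h3 (ltn_trans hle h1).
move=> [p q] [p' q']; rewrite !in_setX /= => /andP[hp hq] /andP[hp' hq'].
move: (gap_classP hp) (gap_classP hq) (gap_classP hp') (gap_classP hq').
case: p q p' q' {hp hq hp' hq'} => [a b] [c d] [a' b'] [c' d'] /= e1 e2 e3 e4.
rewrite /g /=; case: leqP => h1; case: leqP => h2 //= [E1 E2].
- move: E1 E2 e3 e4 => <- <- e3 e4.
  have Eb : b = b' by apply: ord_inj; rewrite e1 e3.
  have Ec : c = c' by apply: ord_inj; apply/eqP; rewrite -(eqn_add2r l) -e2 -e4.
  by rewrite Eb Ec.
- move: E1 E2 e4 e3 => <- <- e4 e3.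
  have Ed : d = d' by apply: ord_inj; rewrite e2 e4.
  have Ea : a = a' by apply: ord_inj; apply/eqP; rewrite -(eqn_add2r l) -e1 -e3.
  by rewrite Ea Ed.
Qed.

Lemma inversion_pairs_split (h : nat) :
  #|inversion_pairs| <=
    #|back_pairs| + \sum_(l < h.+1) #|gap_class l| + #|far_backward_pairs h|.
Proof.
rewrite /far_backward_pairs /back_pairs /gap_class.
rewrite !(card_filter_sum (mem inversion_pairs)) -sum1_card.
under [in X in _ <= _ + X + _]eq_bigr => l _ do rewrite card_filter_sum.
rewrite exchange_big -!big_split /=; apply: leq_sum => qp _.
case: (T _ _) => //=; case: (leqP (gap qp) h) => hd; last by rewrite addn1.
by rewrite (bigD1 (Ordinal (hd : gap qp < h.+1))) //= eqxx add0n -addnA leq_addr.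
Qed.

End InversionPairs.

(* Step 2, combinatorial part: with r the largest size of a gap class of gap
   at most h, the I inversions of X satisfy r^2 <= 2 I and I <= D + h r + F,
   where D counts back arcs and F (h+1) is paid for by the cost. *)
Lemma inversions_decomposition (n : nat) (s : {perm 'I_n}) (T : rel 'I_n)
    (X : {set 'I_n}) (h : nat) :
  semi_complete T ->
  exists r D F, [/\ r * r <= 2 * inversions s X, inversions s X <= D + h * r + F,
     F * h.+1 <= cost T s & D <= back_arcs T X].
Proof.
move=> hsc; rewrite -card_inversion_pairs.
exists (\max_(l < h.+1) #|gap_class s X l|), #|back_pairs s T X|,
  #|far_backward_pairs s T X h|; split.
- apply: (big_ind (fun x => x * x <= 2 * _)) => // [x y hx hy|l _].
    by rewrite /maxn; case: ifP.
  exact: gap_class_sq.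
- apply: leq_trans (inversion_pairs_split s T X h) _.
  rewrite leq_add2r leq_add2l big_ord_recl gap_class0 cards0 add0n.
  apply: (@leq_trans (\sum_(i < h) \max_(l < h.+1) #|gap_class s X l|)).
    by apply: leq_sum => i _; exact: (leq_bigmax (lift ord0 i)).
  by rewrite sum_nat_const card_ord.
- exact: leq_trans (card_far_backward_pairs s T X h) (backward_gaps_le_cost s X hsc).
- exact: card_back_pairs.
Qed.

Section Estimates.
Local Open Scope R_scope.

Lemma exp_monotone (x y : R) : x <= y -> exp x <= exp y.
Proof.
by case/Rle_lt_or_eq_dec => [h|->]; [apply: Rlt_le; exact: exp_increasing | exact: Rle_refl].
Qed.

Lemma Rpower_third_pos (x : R) : 0 < Rpower x (1/3).
Proof. exact: exp_pos. Qed.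

Lemma Rpower_third_cube (x : R) : 0 < x ->
  Rpower x (1/3) * Rpower x (1/3) * Rpower x (1/3) = x.
Proof.
by move=> hx; rewrite -!Rpower_plus (_ : 1/3 + 1/3 + 1/3 = 1) ?Rpower_1 //; field.
Qed.

Lemma Rpower_two_thirds (x : R) : Rpower x (2/3) = Rpower x (1/3) * Rpower x (1/3).
Proof. by rewrite -Rpower_plus; congr Rpower; field. Qed.

Lemma nat_floor (y : R) : 0 <= y -> exists h : nat, INR h <= y < INR h + 1.
Proof.
move=> hy; have [h1 h2] := base_Int_part y.
have hz : (0 <= Int_part y)%Z.
  have : -1 < IZR (Int_part y) by lra.
  by move/lt_IZR; lia.
by exists (Z.to_nat (Int_part y)); rewrite INR_IZR_INZ Z2Nat.id //; lra.
Qed.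

Lemma sum_INR_le (N : nat) (f : nat -> nat) (B : R) :
  (forall m, (m < N)%N -> INR (f m) <= B) -> INR (\sum_(m < N) f m) <= INR N * B.
Proof.
elim: N => [|N IH] H; first by rewrite big_ord0 /=; lra.
rewrite big_ord_recr plus_INR S_INR /=.
have h1 := IH (fun m hm => H m (ltnW hm)); have h2 := H N (ltnSn N).
by apply: Rle_trans (Rplus_le_compat _ _ _ _ h1 h2) _; lra.
Qed.

(* Step 2, analytic part: from I <= D + h r + F with r^2 <= 2 I,
   F (h+1) <= k = t^3/4, D <= t^2 and h = floor (t/2), we get I <= 3 t^2:
   indeed F <= t^2/2 and h r <= t r/2 <= t sqrt (I/2). *)
Lemma inversions_real_bound (I D h r F k t : R) :
  0 <= r -> 0 <= h -> 0 <= F -> 0 <= I -> 0 < t -> t * t * t = 4 * k ->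
  r * r <= 2 * I -> I <= D + h * r + F -> F * (h + 1) <= k -> D <= t * t ->
  2 * h <= t -> t < 2 * (h + 1) -> I <= 3 * (t * t).
Proof.
move=> hr hh hF hI ht htk hrI hIs hFk hD hh1 hh2.
have hF2 : F <= t * t / 2.
  apply: (Rmult_le_reg_r t) => //; nra.
have hy : h * r <= t / 2 * r by nra.
have hyy : (t / 2 * r) * (t / 2 * r) <= t * t * I / 2 by nra.
have hy0 : 0 <= t / 2 * r by nra.
move: (t / 2 * r) hy hyy hy0 => y hy hyy hy0.
case: (Rle_dec I (3 * (t * t))) => // hc; exfalso.
have hIy : I / 2 < y by lra.
have : I * I / 4 < y * y by nra.
nra.
Qed.

Lemma Cconst_ge : 2.4 <= Cconst.
Proof.
have hpi : 3 < PI by have := PI2_3_2; lra.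
have hs : 0.8 <= sqrt (2 / 3).
  by rewrite -(sqrt_square 0.8); [apply: sqrt_le_1_alt; lra | lra].
rewrite /Cconst; nra.
Qed.

Lemma exp_absorbs (t x : R) : 3 / 2 <= t -> 0 <= x -> x <= 3 * (t * t) ->
  (x + 1) * exp (Cconst * sqrt x) <=
  exp (2 * Cconst * t * sqrt (1 + ln (2 * (t * t)))).
Proof.
move=> ht hx0 hx.
have hC := Cconst_ge.
have hln : 1 <= ln (2 * (t * t)).
  rewrite -(ln_exp 1); case: (Req_dec (exp 1) (2 * (t * t))) => [->|ne]; first lra.
  by apply: Rlt_le; apply: ln_increasing; [exact: exp_pos | have := exp_le_3; nra].
have ha : 1.41 <= sqrt (1 + ln (2 * (t * t))).
  by rewrite -(sqrt_square 1.41); [apply: sqrt_le_1_alt; lra | lra].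
have hb0 : 0 <= sqrt x by exact: sqrt_pos.
have hbb : sqrt x * sqrt x = x by apply: sqrt_sqrt.
move: (sqrt (1 + _)) ha => a ha; move: (sqrt x) hb0 hbb => b hb0 hbb.
have hb : b <= 1.74 * t by nra.
move: Cconst hC => C hC.
have hz : 2.592 * t <= 2 * C * t * a - C * b.
  have : 1.08 * t <= 2 * t * a - b by nra.
  have : 0 <= (C - 2.4) * (2 * t * a - b) by apply: Rmult_le_pos; nra.
  nra.
rewrite (_ : 2 * C * t * a = (2 * C * t * a - C * b) + C * b); last by ring.
move: (2 * C * t * a - C * b) hz => z hz.
rewrite exp_plus; apply: Rmult_le_compat_r; first exact: Rlt_le (exp_pos _).
(* (1 + z/4)^4 <= exp z dominates x + 1 <= 3 t^2 + 1 *)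
have hez : exp z = exp (z / 4) * exp (z / 4) * exp (z / 4) * exp (z / 4).
  by rewrite -!exp_plus; congr exp; lra.
have := exp_ineq1_le (z / 4); rewrite hez.
move: (exp (z / 4)) => e he.
have hw : 0.648 * t <= z / 4 by lra.
move: (z / 4) hw he => w hw he.
have h2 : (1 + w) * (1 + w) <= e * e by nra.
have : (1 + w) * (1 + w) * (1 + w) * (1 + w) <= e * e * e * e by nra.
have : x + 1 <= (1 + w) * (1 + w) * (1 + w) * (1 + w) by nra.
lra.
Qed.

Lemma cube_root_4k (k : nat) (t := Rpower (4 * INR k) (1/3)) : (0 < k)%N ->
  [/\ 0 < t, t * t * t = 4 * INR k, 3 / 2 <= t & dthr k = t * t].
Proof.
move=> hk; have hk1 := le_INR _ _ (leP hk).
have t_pos : 0 < t := Rpower_third_pos _.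
have t_cube : t * t * t = 4 * INR k by apply: Rpower_third_cube; simpl in hk1; lra.
by split => //; [simpl in hk1; nra | exact: Rpower_two_thirds].
Qed.

Lemma cut_few_inversions (n : nat) (T : rel 'I_n) (s : {perm 'I_n}) (k : nat)
    (X : {set 'I_n}) :
  (0 < k)%N -> semi_complete T -> (cost T s <= k)%N ->
  INR (back_arcs T X) <= dthr k -> INR (inversions s X) <= 3 * dthr k.
Proof.
move=> hk hsc hs; have [ht htk _ ->] := cube_root_4k hk.
move: (Rpower _ _) ht htk => t ht htk hX.
have [h [hh1 hh2]] := nat_floor (Rlt_le _ _ (Rdiv_lt_0_compat _ _ ht Rlt_0_2)).
have [r [D [F [hr hI hF hD]]]] := inversions_decomposition s X h hsc.
have {}hr := le_INR _ _ (leP hr); rewrite !mult_INR /= in hr.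
have {}hI := le_INR _ _ (leP hI); rewrite !plus_INR mult_INR in hI.
have {}hF := le_INR _ _ (leP (leq_trans hF hs)); rewrite mult_INR S_INR in hF.
have {}hD := le_INR _ _ (leP hD).
apply: (inversions_real_bound (D := INR D) (h := INR h) (r := INR r) (F := INR F)
  (k := INR k)) => //; try exact: pos_INR; lra.
Qed.

(* A Hardy-Ramanujan constant is nonnegative (take m = 0). *)
Lemma HR_constant_nonneg (A : R) : HR_constant A -> 0 <= A.
Proof.
move=> hA; have := hA 0%N; have := pos_INR (npartitions 0).
rewrite /= sqrt_0 Rmult_0_r exp_0; lra.
Qed.

Lemma partitions_upto_le (A : R) (M : nat) : HR_constant A ->
  INR (\sum_(m < M.+1) npartitions m) <=
  (INR M + 1) * (A * exp (Cconst * sqrt (INR M))).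
Proof.
move=> hA; have hA0 := HR_constant_nonneg hA.
rewrite -S_INR; apply: sum_INR_le => m hm; apply: Rle_trans (hA m) _.
have hm1 : 1 <= INR (m + 1) by rewrite plus_INR /=; have := pos_INR m; lra.
apply: Rmult_le_compat.
- by apply: Rmult_le_pos => //; apply/Rlt_le/Rinv_0_lt_compat; lra.
- exact: Rlt_le (exp_pos _).
- rewrite /Rdiv -{2}(Rmult_1_r A); apply: Rmult_le_compat_l => //.
  by rewrite -Rinv_1; apply: Rinv_le_contravar; lra.
- apply/exp_monotone/Rmult_le_compat_l; first by have := Cconst_ge; lra.
  by apply/sqrt_le_1_alt/le_INR/leP.
Qed.

Lemma card_few_inversions (A : R) (k n : nat) (s : {perm 'I_n})
    (S : {set {set 'I_n}}) :
  HR_constant A -> (0 < k)%N ->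
  (forall X, X \in S -> INR (inversions s X) <= 3 * dthr k) ->
  INR #|S| <= cut_bound A k n.
Proof.
move=> hA hk hS; have [t_pos _ t_ge t_sq] := cube_root_4k hk.
rewrite t_sq in hS; rewrite /dthr in t_sq; rewrite /cut_bound {}t_sq.
move: (Rpower _ _) t_pos t_ge hS => t t_pos t_ge hS.
pose M := \max_(X in S) inversions s X.
have M_le : INR M <= 3 * (t * t).
  apply: (big_ind (fun x => INR x <= 3 * (t * t))) => [/=|x y|//]; first nra.
  by rewrite /maxn; case: ifP.
have cardS : (#|S| <= n.+1 * \sum_(m < M.+1) npartitions m)%N.
  by apply: card_le_partition_sums => X hX; exact: leq_bigmax_cond.
have hpart := partitions_upto_le M hA.
have habs := exp_absorbs t_ge (pos_INR M) M_le.
have hA0 := HR_constant_nonneg hA.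
have hn := pos_INR n.+1.
(* #|S| <= (n+1) (M+1) A e^(C sqrt M) <= A e^(2 C t sqrt(1 + ln (2 t^2))) (n+1) *)
apply: Rle_trans (le_INR _ _ (leP cardS)) _; rewrite mult_INR addn1.
apply: Rle_trans (Rmult_le_compat_l _ _ _ hn hpart) _.
move: (exp _) (exp _) habs => e1 e2 habs.
have : 0 <= A * INR n.+1 by apply: Rmult_le_pos.
nra.
Qed.

End Estimates.

Theorem mainTheorem14 (A : R) (hA : HR_constant A)
  (k n : nat) (hk : 0 < k) (T : rel 'I_n)
  (hloop : loopless T) (hsc : semi_complete T)
  (hord : exists s : {perm 'I_n}, cost T s <= k) :
  Rle (INR (num_dcuts T (dthr k))) (cut_bound A k n).
Proof.
case: hord => s hs.
rewrite /num_dcuts; apply: (card_few_inversions (s := s) hA hk) => X.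
rewrite inE; case: Rle_dec => // hX _.
exact: cut_few_inversions hk hsc hs hX.
Qed.
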